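(* Let $\Sigma$ be the set of all groupoid identities satisfied by each of the four binary operations $x+y$, $x-y$, $-x+y$, $-x-y$ in every abelian group. Then the interchange laws that belong to $\Sigma$ form a basis for $\Sigma$.
   Context: A groupoid term is linear if no variable occurs in it more than once. If $p$ is a linear term and $q$ is obtained from $p$ by interchanging (swapping) two of its variables, then the identity $p=q$ is called an interchange law. A basis for $\Sigma$ is a set of identities whose equational consequences are exactly $\Sigma$. *)

From HB Require Import structures.
From mathcomp Require Import all_boot all_algebra.
Set Implicit Arguments. Unset Strict Implicit. Unset Printing Implicit Defensive.
Import GRing.Theory.
Local Open Scope ring_scope.

Inductive term : Type :=
| Var of nat
| Op of term & term.

Fixpoint vars (t : term) : seq nat :=
  match t with
  | Var v => [:: v]
  | Op t1 t2 => vars t1 ++ vars t2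
  end.

Definition linear_term (t : term) : bool := uniq (vars t).

Fixpoint subst (s : nat -> term) (t : term) : term :=
  match t with
  | Var v => s v
  | Op t1 t2 => Op (subst s t1) (subst s t2)
  end.

Definition swap_var (x y v : nat) : nat :=
  if v == x then y else if v == y then x else v.

Definition swap_term (x y : nat) (t : term) : term :=
  subst (fun v => Var (swap_var x y v)) t.

Definition interchange_law (p q : term) : Prop :=
  exists x y : nat,
    [/\ linear_term p, x \in vars p, y \in vars p, x != y & q = swap_term x y p].

Fixpoint eval (T : Type) (o : T -> T -> T) (f : nat -> T) (t : term) : T :=
  match t with
  | Var v => f v
  | Op t1 t2 => o (eval o f t1) (eval o f t2)
  end.

Inductive sign_op : Type := PP | PM | MP | MM.

Definition abop (G : zmodType) (k : sign_op) : G -> G -> G :=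
  match k with
  | PP => fun x y => x + y
  | PM => fun x y => x - y
  | MP => fun x y => - x + y
  | MM => fun x y => - x - y
  end.

Definition Sigma (p q : term) : Prop :=
  forall (G : zmodType) (k : sign_op) (f : nat -> G),
    eval (abop k) f p = eval (abop k) f q.

Inductive eq_conseq (E : term -> term -> Prop) : term -> term -> Prop :=
| ec_ax p q (s : nat -> term) : E p q -> eq_conseq E (subst s p) (subst s q)
| ec_refl p : eq_conseq E p p
| ec_sym p q : eq_conseq E p q -> eq_conseq E q p
| ec_trans p q r : eq_conseq E p q -> eq_conseq E q r -> eq_conseq E p r
| ec_cong p p' q q' :
    eq_conseq E p p' -> eq_conseq E q q' -> eq_conseq E (Op p q) (Op p' q').

Definition Sigma_interchange (p q : term) : Prop :=
  interchange_law p q /\ Sigma p q.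

Definition is_basis (B S : term -> term -> Prop) : Prop :=
  forall p q, eq_conseq B p q <-> S p q.

From mathcomp Require Import all_boot all_algebra zify.
Set Implicit Arguments. Unset Strict Implicit. Unset Printing Implicit Defensive.
Import GRing.Theory.

(* Give each leaf of a term the parities of the numbers of left and right
   steps on its path from the root; these classes form the Klein group
   (Z/2)^2.  Under each of the four operations a term evaluates to a signed
   sum of its variables, a leaf of class (a, b) carrying the sign of the
   corresponding character, so p = q lies in Sigma iff both sides carry the
   same multiset of (variable, class) pairs; soundness follows at once.
   Conversely, a substitution instance of an interchange law in Sigma can
   exchange any two disjoint subterms of the same class.  With such exchanges
   both sides of an identity of Sigma are brought to a common top shape
   x * R, R * x or (x * y) * R, chosen by comparing how many leaves have
   class (1, 0) and (0, 1), and induction on the size finishes the proof. *)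

Local Notation ec := (eq_conseq Sigma_interchange).

(** * Leaf classes and the identities of Sigma *)

Local Notation cls := (bool * bool)%type.
Definition c00 : cls := (false, false).
Definition c10 : cls := (true, false).
Definition c01 : cls := (false, true).
Definition c11 : cls := (true, true).
Definition all_cls : seq cls := [:: c00; c10; c01; c11].

Definition stepL (c : cls) : cls := (~~ c.1, c.2).
Definition stepR (c : cls) : cls := (c.1, ~~ c.2).

Fixpoint occs_at (c : cls) (t : term) : seq (nat * cls) :=
  match t with
  | Var v => [:: (v, c)]
  | Op a b => occs_at (stepL c) a ++ occs_at (stepR c) b
  end.

Local Notation occs := (occs_at c00).

Definition negated (k : sign_op) (c : cls) : bool :=
  match k with PP => false | PM => c.2 | MP => c.1 | MM => c.1 (+) c.2 end.

Definition signed (G : zmodType) (k : sign_op) (c : cls) (x : G) : G :=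
  if negated k c then (- x)%R else x.

Lemma eval_subst (G : zmodType) k (f : nat -> G) s t :
  eval (abop k) f (subst s t) = eval (abop k) (fun v => eval (abop k) f (s v)) t.
Proof. by elim: t => //= a -> b ->. Qed.

Lemma eq_conseq_Sigma p q : ec p q -> Sigma p q.
Proof.
elim=> {p q} [p q s [_ pq] G k f | // | p q _ pq G k f | p q r _ pq _ qr G k f
             | p p' q q' _ pp' _ qq' G k f /=].
- by rewrite !eval_subst pq.
- by rewrite pq.
- by rewrite pq qr.
- by rewrite pp' qq'.
Qed.

Lemma eval_signed (G : zmodType) k (f : nat -> G) c t :
  signed k c (eval (abop k) f t) = (\sum_(o <- occs_at c t) signed k o.2 (f o.1))%R.
Proof.
elim: t c => [v|a IHa b IHb] [l r] /=; first by rewrite big_seq1.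
rewrite big_cat -IHa -IHb /signed {IHa IHb}.
by case: k; case: l; case: r => /=; rewrite ?opprD ?opprK // addrC.
Qed.

Lemma eval_occs (G : zmodType) k (f : nat -> G) t :
  eval (abop k) f t = (\sum_(o <- occs t) signed k o.2 (f o.1))%R.
Proof. by rewrite -eval_signed /signed; case: k. Qed.

Lemma perm_occs_Sigma p q : perm_eq (occs p) (occs q) -> Sigma p q.
Proof. by move=> pq G k f; rewrite !eval_occs (perm_big _ pq). Qed.

Lemma sum_signed_indicator k v (s : seq (nat * cls)) :
  (\sum_(o <- s) signed k o.2 (o.1 == v)%:Z =
   \sum_(c <- all_cls) signed k c (count_mem (v, c) s)%:Z)%R.
Proof.
elim: s => [|[w c] s IH]; first by rewrite big_nil !big_cons big_nil /signed; case: k.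
rewrite big_cons IH !big_cons !big_nil /= !xpair_eqE /signed {IH}.
by case: (w == v); case: c => [[] []]; case: k => /=; lia.
Qed.

(* The four operations give the four character sums of the Klein group
   [cls] over the counts of each class; these determine the counts. *)
Lemma Sigma_perm_occs p q : Sigma p q -> perm_eq (occs p) (occs q).
Proof.
move=> pq; apply/allP => [[v c]] _; apply/eqP.
have E k : (\sum_(c <- all_cls) signed k c (count_mem (v, c) (occs p))%:Z =
            \sum_(c <- all_cls) signed k c (count_mem (v, c) (occs q))%:Z)%R.
  by rewrite -!sum_signed_indicator -!(eval_occs k (fun w => (w == v)%:Z%R)) pq.
have count_eq (d : cls) : count_mem (v, d) (occs p) = count_mem (v, d) (occs q).
  move: (E PP) (E PM) (E MP) (E MM).
  rewrite !big_cons !big_nil /signed /c00 /c10 /c01 /c11 /=.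
  by case: d => [[] []]; lia.
exact: count_eq.
Qed.

Lemma Sigma_occs p q : Sigma p q <-> perm_eq (occs p) (occs q).
Proof. by split; [exact: Sigma_perm_occs | exact: perm_occs_Sigma]. Qed.

(** * Exchanging subterms of the same class *)

Fixpoint subterm (t : term) (p : seq bool) : term :=
  match p, t with
  | b :: p', Op l r => subterm (if b then r else l) p'
  | _, _ => t
  end.

Fixpoint is_pos (t : term) (p : seq bool) : bool :=
  match p, t with
  | [::], _ => true
  | b :: p', Op l r => is_pos (if b then r else l) p'
  | _ :: _, Var _ => false
  end.

Fixpoint replace_at (t : term) (p : seq bool) (u : term) : term :=
  match p, t with
  | [::], _ => u
  | b :: p', Op l r =>
      if b then Op l (replace_at r p' u) else Op (replace_at l p' u) r
  | _ :: _, Var _ => t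
  end.

Fixpoint walk (c : cls) (p : seq bool) : cls :=
  if p is b :: p' then walk (if b then stepR c else stepL c) p' else c.

Lemma replace_at_subterm t p : replace_at t p (subterm t p) = t.
Proof. by elim: p t => [|[] p IH] [v|l r] //=; rewrite IH. Qed.

Lemma occs_at_pos c t v k :
  (v, k) \in occs_at c t ->
  exists p, [/\ is_pos t p, subterm t p = Var v & walk c p = k].
Proof.
elim: t c => [w|a IHa b IHb] c /=.
  by rewrite inE => /eqP [-> ->]; exists [::].
rewrite mem_cat => /orP [/IHa|/IHb] [p [tp tv pk]].
- by exists (false :: p).
- by exists (true :: p).
Qed.

(* Fresh variables: the leaf at path [p] is renamed [pickle (pre ++ p)]. *)
Fixpoint label (t : term) (pre : seq bool) : term :=
  match t with
  | Var _ => Var (pickle pre)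
  | Op a b => Op (label a (rcons pre false)) (label b (rcons pre true))
  end.

Fixpoint label_hole (t : term) (p : seq bool) (pre : seq bool) : term :=
  match p, t with
  | b :: p', Op l r =>
      if b then Op (label l (rcons pre false)) (label_hole r p' (rcons pre true))
      else Op (label_hole l p' (rcons pre false)) (label r (rcons pre true))
  | _, _ => Var (pickle pre)
  end.

Lemma subst_label t pre (g : nat -> term) :
  (forall p, g (pickle (pre ++ p)) = subterm t p) -> subst g (label t pre) = t.
Proof.
elim: t pre => [v|a IHa b IHb] pre gE /=; first by rewrite -(cats0 pre) gE.
by rewrite IHa ?IHb // => p; rewrite cat_rcons gE.
Qed.

Lemma subst_label_hole t p pre (g : nat -> term) :
  is_pos t p ->
  (forall p', p' != p -> g (pickle (pre ++ p')) = subterm t p') ->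
  subst g (label_hole t p pre) = replace_at t p (g (pickle (pre ++ p))).
Proof.
elim: p t pre => [|b p IH] [v|l r] pre //=; rewrite ?cats0 // => tp gE.
have gE' b' p' : b' :: p' != b :: p ->
    g (pickle (rcons pre b' ++ p')) = subterm (if b' then r else l) p'.
  by move=> ne; rewrite cat_rcons gE.
have W b' : g (pickle (pre ++ b' :: p)) = g (pickle (rcons pre b' ++ p)).
  by rewrite cat_rcons.
by case: b tp {gE} gE' W => tp gE' W /=;
  rewrite subst_label ?IH ?W // => p' *; apply: gE'; rewrite ?eqseq_cons.
Qed.

Definition has_prefix (pre : seq bool) (x : nat) : Prop := exists p, x = pickle (pre ++ p).

Lemma has_prefix_rcons pre b x : has_prefix (rcons pre b) x -> has_prefix pre x.
Proof. by case=> p ->; eexists; rewrite cat_rcons. Qed.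

Lemma has_prefix_sides pre x :
  has_prefix (rcons pre false) x -> has_prefix (rcons pre true) x -> False.
Proof.
case=> p1 -> [p2 /(pcan_inj pickleK)/eqP].
by rewrite !cat_rcons eqseq_cat // eqxx.
Qed.

Lemma label_vars t pre x : x \in vars (label t pre) -> has_prefix pre x.
Proof.
elim: t pre => [v|a IHa b IHb] pre /=.
  by rewrite inE => /eqP ->; exists [::]; rewrite cats0.
by rewrite mem_cat => /orP [/IHa|/IHb] /has_prefix_rcons.
Qed.

Lemma label_hole_vars t p pre x : x \in vars (label_hole t p pre) -> has_prefix pre x.
Proof.
elim: p t pre => [|b p IH] [v|l r] pre /=;
  try by rewrite inE => /eqP ->; exists [::]; rewrite cats0.
case: b; rewrite mem_cat => /orP [] xP.
- exact: has_prefix_rcons (label_vars xP).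
- exact: has_prefix_rcons (IH _ _ xP).
- exact: has_prefix_rcons (IH _ _ xP).
- exact: has_prefix_rcons (label_vars xP).
Qed.

Lemma uniq_label t pre : uniq (vars (label t pre)).
Proof.
elim: t pre => [v|a IHa b IHb] pre //=.
rewrite cat_uniq IHa IHb andbT /=; apply/hasPn => x /label_vars xb.
by apply/negP => /label_vars xa; apply: has_prefix_sides xa xb.
Qed.

Lemma uniq_label_hole t p pre : uniq (vars (label_hole t p pre)).
Proof.
elim: p t pre => [|b p IH] [v|l r] pre //=.
case: b; rewrite /= cat_uniq ?IH ?uniq_label andbT /=; apply/hasPn => x xr;
  apply/negP => xl.
- exact: has_prefix_sides (label_vars xl) (label_hole_vars xr).
- exact: has_prefix_sides (label_hole_vars xl) (label_vars xr).
Qed.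

Lemma hole_occs_at t p pre c :
  is_pos t p -> (pickle (pre ++ p), walk c p) \in occs_at c (label_hole t p pre).
Proof.
elim: p t pre c => [|b p IH] [v|l r] pre c //=; rewrite ?cats0 ?inE //.
by case: b => /= tp; rewrite mem_cat -cat_rcons IH ?orbT.
Qed.

Lemma vars_occs_at c t : vars t = map fst (occs_at c t).
Proof. by elim: t c => [v|a IHa b IHb] c //=; rewrite map_cat -IHa -IHb. Qed.

Lemma occs_at_swap x y c t :
  occs_at c (swap_term x y t) = map (fun o => (swap_var x y o.1, o.2)) (occs_at c t).
Proof. by elim: t c => [v|a IHa b IHb] c //=; rewrite map_cat -IHa -IHb. Qed.

Lemma swap_varK x y : involutive (swap_var x y).
Proof.
move=> v; rewrite /swap_var.
have [->|vx] := eqVneq v x; first by case: (eqVneq y x) => [->|]; rewrite ?eqxx.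
have [->|vy] := eqVneq v y; first by rewrite eqxx.
by rewrite (negbTE vx) (negbTE vy).
Qed.

Lemma uniq_fst_mem (T : eqType) (s : seq (nat * T)) a j k :
  uniq (map fst s) -> (a, j) \in s -> (a, k) \in s -> j = k.
Proof.
elim: s => [|[b m] s IH] //= /andP [bs us]; rewrite !in_cons.
case/orP => [/eqP [ab ->]|aj]; case/orP => [/eqP [ab' ->]|ak] //.
- by move/(map_f fst): ak; rewrite ab (negbTE bs).
- by move/(map_f fst): aj; rewrite ab' (negbTE bs).
- exact: IH.
Qed.

Lemma perm_swap_fst (T : eqType) x y k (s : seq (nat * T)) :
  uniq (map fst s) -> (x, k) \in s -> (y, k) \in s ->
  perm_eq s (map (fun o => (swap_var x y o.1, o.2)) s).
Proof.
set f := fun o : nat * T => (swap_var x y o.1, o.2).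
have fK : involutive f by move=> [v c]; rewrite /f /= swap_varK.
move=> us xs ys; apply: uniq_perm.
- exact: map_uniq us.
- by rewrite map_inj_uniq ?(map_uniq us) //; apply: inv_inj.
move=> [v j]; rewrite -{2}(fK (v, j)) (mem_map (inv_inj fK)) /f /= /swap_var.
have [->|vx] := eqVneq v x.
  by apply/idP/idP => vs; [rewrite (uniq_fst_mem us vs xs) | rewrite (uniq_fst_mem us vs ys)].
have [->|vy] //= := eqVneq v y.
by apply/idP/idP => vs; [rewrite (uniq_fst_mem us vs ys) | rewrite (uniq_fst_mem us vs xs)].
Qed.

Lemma swap_Sigma P x y k :
  linear_term P -> (x, k) \in occs P -> (y, k) \in occs P -> Sigma P (swap_term x y P).
Proof.
move=> linP xP yP; apply/Sigma_occs; rewrite occs_at_swap.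
by apply: perm_swap_fst xP yP; rewrite -vars_occs_at.
Qed.

Lemma subst_comp s s' t : subst s (subst s' t) = subst (fun v => subst s (s' v)) t.
Proof. by elim: t => //= a -> b ->. Qed.

(* Two disjoint subterms of the same class, one on each side of the root,
   can be exchanged: instantiate the interchange law obtained by labelling
   every other leaf with a fresh variable. *)
Lemma ec_swap A B p q :
  is_pos A p -> is_pos B q -> walk c10 p = walk c01 q ->
  ec (Op A B) (Op (replace_at A p (subterm B q)) (replace_at B q (subterm A p))).
Proof.
move=> Ap Bq pq.
set X := pickle (false :: p); set Y := pickle (true :: q).
set P := Op (label_hole A p [:: false]) (label_hole B q [:: true]).
set g := fun n => subterm (Op A B) (odflt [::] (unpickle n)).
have gE r : g (pickle r) = subterm (Op A B) r by rewrite /g pickleK.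
have pickle_eq := inj_eq (pcan_inj (@pickleK (seq bool))).
have PE : subst g P = Op A B.
  by rewrite /= !subst_label_hole // !gE /= !replace_at_subterm.
have swap_other r : r != false :: p -> r != true :: q ->
    swap_var X Y (pickle r) = pickle r.
  by move=> rX rY; rewrite /swap_var !pickle_eq (negbTE rX) (negbTE rY).
have swapPE : subst g (swap_term X Y P) =
              Op (replace_at A p (subterm B q)) (replace_at B q (subterm A p)).
  rewrite /swap_term subst_comp /= !subst_label_hole //.
  - by rewrite /swap_var !pickle_eq !eqxx /= !gE.
  - by move=> r rq; rewrite swap_other ?gE // eqseq_cons.
  - by move=> r rp; rewrite swap_other ?gE // eqseq_cons.
have linP : linear_term P.
  rewrite /linear_term /= cat_uniq !uniq_label_hole andbT /=.
  apply/hasPn => x /label_hole_vars xY; apply/negP => /label_hole_vars xX.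
  exact: (has_prefix_sides (pre := [::]) xX xY).
have XP : (X, walk c10 p) \in occs P.
  by rewrite /= mem_cat (hole_occs_at [:: false] c10 Ap).
have YP : (Y, walk c10 p) \in occs P.
  by rewrite /= mem_cat pq (hole_occs_at [:: true] c01 Bq) orbT.
rewrite -{1}PE -swapPE; apply: ec_ax; split; last exact: swap_Sigma linP XP YP.
by exists X, Y; rewrite /X /Y pickle_eq !(vars_occs_at c00) (map_f fst XP) (map_f fst YP).
Qed.

(** * Mirror symmetry *)

Fixpoint mirror (t : term) : term :=
  if t is Op a b then Op (mirror b) (mirror a) else t.

Lemma mirrorK : involutive mirror.
Proof. by elim=> //= a -> b ->. Qed.

Definition mirror_op (k : sign_op) : sign_op :=
  match k with PM => MP | MP => PM | _ => k end.

Lemma eval_mirror (G : zmodType) k (f : nat -> G) t :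
  eval (abop k) f (mirror t) = eval (abop (mirror_op k)) f t.
Proof.
elim: t => //= a -> b ->.
by case: k => /=; rewrite addrC // opprK addrC.
Qed.

Lemma mirror_subst s t : mirror (subst s t) = subst (mirror \o s) (mirror t).
Proof. by elim: t => //= a -> b ->. Qed.

Lemma vars_mirror t : vars (mirror t) = rev (vars t).
Proof. by elim: t => //= a -> b ->; rewrite rev_cat. Qed.

Lemma mirror_swap x y t : mirror (swap_term x y t) = swap_term x y (mirror t).
Proof. exact: mirror_subst. Qed.

Lemma Sigma_mirror p q : Sigma p q -> Sigma (mirror p) (mirror q).
Proof. by move=> pq G k f; rewrite !eval_mirror. Qed.

Lemma ec_mirror p q : ec p q -> ec (mirror p) (mirror q).
Proof.
elim=> {p q} [p q s [[x [y [linp xp yp xy ->]]] pq] | p | p q _ | p q r _ pq _ qr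
             | p p' q q' _ pp' _ qq'] /=.
- rewrite !(mirror_subst s) mirror_swap; apply: ec_ax; split.
    by exists x, y; rewrite /linear_term vars_mirror rev_uniq !mem_rev.
  by rewrite -mirror_swap; apply: Sigma_mirror.
- exact: ec_refl.
- exact: ec_sym.
- exact: ec_trans qr.
- exact: ec_cong.
Qed.

Fixpoint nleaves (t : term) : nat :=
  if t is Op a b then nleaves a + nleaves b else 1.

Definition is_var (t : term) : bool := if t is Var _ then true else false.

Lemma nleaves_gt0 t : 0 < nleaves t.
Proof. by elim: t => //= a Ha b Hb; rewrite addn_gt0 Ha. Qed.

Lemma size_occs_at c t : size (occs_at c t) = nleaves t.
Proof. by elim: t c => //= a IHa b IHb c; rewrite size_cat IHa IHb. Qed.

Lemma nleaves_mirror t : nleaves (mirror t) = nleaves t.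
Proof. by elim: t => //= a -> b ->; rewrite addnC. Qed.

Lemma nleaves_replace_at t p u :
  is_pos t p -> nleaves (replace_at t p u) + nleaves (subterm t p) = nleaves t + nleaves u.
Proof.
elim: p t => [|[] p IH] [v|l r] //= tp; try by rewrite addnC.
- by rewrite -addnA IH // addnA.
- by rewrite addnAC IH // addnAC.
Qed.

Definition leaf_cls (c : cls) (t : term) : seq cls := map snd (occs_at c t).

Fixpoint node_cls (c : cls) (t : term) : seq cls :=
  if t is Op a b then c :: node_cls (stepL c) a ++ node_cls (stepR c) b else [::].

Definition cnt (k : cls) (t : term) : nat := count_mem k (leaf_cls c00 t).

Definition cls_compl (f : cls) : cls := (~~ f.1, ~~ f.2).

Lemma leaf_cls_Op c a b :
  leaf_cls c (Op a b) = leaf_cls (stepL c) a ++ leaf_cls (stepR c) b.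
Proof. exact: map_cat. Qed.

Lemma node_cls_pos c t k :
  k \in node_cls c t -> exists p a b, [/\ is_pos t p, subterm t p = Op a b & walk c p = k].
Proof.
elim: t c => [w|a IHa b IHb] c //=.
rewrite inE => /orP [/eqP ->|]; first by exists [::], a, b.
rewrite mem_cat => /orP [/IHa|/IHb] [p [a' [b' [H1 H2 H3]]]].
- by exists (false :: p), a', b'.
- by exists (true :: p), a', b'.
Qed.

Lemma node_cls_parent c t k :
  k \in node_cls c t -> [\/ k = c, stepL k \in node_cls c t | stepR k \in node_cls c t].
Proof.
elim: t c => [w|a IHa b IHb] c //=.
rewrite !inE !mem_cat => /orP [/eqP ->|/orP [/IHa [->|H|H]|/IHb [->|H|H]]].
- by constructor 1.
- by constructor 2; rewrite /stepL /= negbK -surjective_pairing eqxx.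
- by constructor 2; rewrite H orbT.
- by constructor 3; rewrite H orbT.
- by constructor 3; rewrite /stepR /= negbK -surjective_pairing eqxx.
- by constructor 2; rewrite H !orbT.
- by constructor 3; rewrite H !orbT.
Qed.

Lemma leaf_cls_const c t k : all (pred1 k) (leaf_cls c t) -> is_var t /\ c = k.
Proof.
elim: t c => [w|a IHa b IHb] c /=; first by rewrite andbT => /eqP.
rewrite leaf_cls_Op all_cat => /andP [/IHa [_ ak] /IHb [_ bk]].
by move: ak bk; case: c => [[] []] /= <-.
Qed.

Lemma leaf_cls_meet t j :
  j \in [:: c00; c11] -> has (mem [:: c10; c01; j]) (leaf_cls c01 t).
Proof.
move=> jP; apply/negPn/negP => /hasPn avoid.
have [_] : is_var t /\ c01 = cls_compl j.
  apply: leaf_cls_const; apply/allP => k /avoid.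
  by move: jP; rewrite !inE {avoid}; case: k j => [[] []] [[] []].
by move: jP {avoid}; rewrite !inE; case: j => [[] []].
Qed.

(* Each leaf of class [cls_compl f] has a sibling of class [f]; when [f] is
   not the class of an inner node, that sibling is a leaf. *)
Lemma count_leaf_cls_compl f c t : f \notin node_cls c t ->
  count_mem (cls_compl f) (leaf_cls c t) <=
  count_mem f (leaf_cls c t) + (is_var t && (c == cls_compl f)).
Proof.
have compl_f : (f == cls_compl f) = false by case: f => [[] []].
elim: t c => [w|a IHa b IHb] c /=; first by rewrite !addn0 leq_addl.
rewrite inE mem_cat !negb_or => /and3P [_ fa fb].
have {IHa}IHa := IHa _ fa; have {IHb}IHb := IHb _ fb.
rewrite leaf_cls_Op !count_cat addn0.
have leaf_var d u : d \notin node_cls d u -> leaf_cls d u = [:: d].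
  by case: u => //= ? ?; rewrite inE eqxx.
have [eL|nL] := eqVneq (stepL c) (cls_compl f).
  have eR : stepR c = f by clear -eL; move: eL; case: c f => [[] []] [[] []].
  move: fb IHa; rewrite eR eL eqxx andbT => /leaf_var ->; rewrite /= compl_f eqxx.
  by case: (is_var a) => /=; lia.
have [eR|nR] := eqVneq (stepR c) (cls_compl f).
  have eL : stepL c = f by clear -eR; move: eR; case: c f => [[] []] [[] []].
  move: fa IHb; rewrite eL eR eqxx andbT => /leaf_var ->; rewrite /= compl_f eqxx.
  by case: (is_var b) => /=; lia.
by rewrite (negbTE nL) (negbTE nR) !andbF !addn0 in IHa IHb; rewrite leq_add.
Qed.

Lemma ec_perm_occs t u : ec t u -> perm_eq (occs t) (occs u).
Proof. by move/eq_conseq_Sigma/Sigma_perm_occs. Qed.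

Lemma perm_occs_cnt k t u : perm_eq (occs t) (occs u) -> cnt k t = cnt k u.
Proof. by move/(perm_map snd)/permP/(_ (pred1 k)). Qed.

Lemma perm_occs_nleaves t u : perm_eq (occs t) (occs u) -> nleaves t = nleaves u.
Proof. by move/perm_size; rewrite !size_occs_at. Qed.

Lemma ec_shrink_left A B k :
  k \in node_cls c10 A -> k \in leaf_cls c01 B ->
  exists A' B', ec (Op A B) (Op A' B') /\ nleaves A' < nleaves A.
Proof.
move=> /node_cls_pos [p [a [b [Ap Apab pk]]]].
move=> /mapP [[v k'] /occs_at_pos [q [Bq Bqv qk]] /= kk'].
exists (replace_at A p (subterm B q)), (replace_at B q (subterm A p)); split.
  by apply: ec_swap; rewrite ?pk ?qk.
have := nleaves_replace_at (subterm B q) Ap; rewrite Apab Bqv /=.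
by have := nleaves_gt0 a; have := nleaves_gt0 b; lia.
Qed.

Definition stuck (A B : term) : bool := ~~ has (mem (leaf_cls c01 B)) (node_cls c10 A).

Lemma ec_stuck A B : exists A' B', ec (Op A B) (Op A' B') /\ stuck A' B'.
Proof.
move: {2}(nleaves A) (leqnn (nleaves A)) => n.
elim: n A B => [|n IH] A B An; first by have := nleaves_gt0 A; lia.
have [/hasP [k kA kB]|st] := boolP (has (mem (leaf_cls c01 B)) (node_cls c10 A)).
  have [A' [B' [e lt]]] := ec_shrink_left kA kB.
  have [|A'' [B'' [e' st]]] := IH A' B'; first by lia.
  by exists A'', B''; split=> //; apply: ec_trans e e'.
by exists A, B; split=> //; apply: ec_refl.
Qed.

(* If no exchange can shrink the left factor [A], then [c01] is not the class
   of an inner node of [A] (else the class of its parent would be one too, and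
   the leaves of [B] would avoid three classes), so [count_leaf_cls_compl]
   applies with [f := c01]. *)
Lemma stuck_cnt A1 A2 B (t := Op (Op A1 A2) B) :
  stuck (Op A1 A2) B ->
  cnt c10 t < cnt c01 t \/ [/\ cnt c10 t = 0, cnt c01 t = 0, is_var A1 & is_var A2].
Proof.
rewrite {}/t; set A := Op A1 A2 => /hasPn avoid.
have cntE k : cnt k (Op A B) = count_mem k (leaf_cls c10 A) + count_mem k (leaf_cls c01 B).
  by rewrite /cnt leaf_cls_Op count_cat.
have B10 : c10 \notin leaf_cls c01 B by apply: avoid; rewrite inE eqxx.
have meet j : j \in node_cls c10 A -> j \in [:: c00; c11] -> c01 \in leaf_cls c01 B.
  move=> jA /(leaf_cls_meet B)/hasP [k kB]; rewrite !inE => /or3P [/eqP k10|/eqP k01|/eqP kj].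
  - by move: B10; rewrite -k10 kB.
  - by move: kB; rewrite k01.
  - by case/negP: (avoid _ jA); rewrite -kj.
have A01 : c01 \notin node_cls c10 A.
  by apply/negP => /[dup] /avoid /negP B01 /node_cls_parent [//|/meet|/meet] /(_ isT).
have := count_leaf_cls_compl A01; rewrite (_ : cls_compl c01 = c10) // addn0 => A10.
rewrite !cntE (count_memPn B10) addn0.
have [lt|ge] := ltnP (count_mem c10 (leaf_cls c10 A))
                     (count_mem c01 (leaf_cls c10 A) + count_mem c01 (leaf_cls c01 B)).
  by left.
have B01 : c01 \notin leaf_cls c01 B by apply/count_memPn; lia.
right; move: meet {ge avoid cntE A01 A10}; rewrite {}/A.
case: A1 => [x1|a1 a2]; case: A2 => [x2|b1 b2] meet.
- by rewrite (count_memPn B01).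
- by case/negP: B01; apply: (meet c11).
- by case/negP: B01; apply: (meet c00).
- by case/negP: B01; apply: (meet c00).
Qed.

Lemma ec_leaf_head t :
  0 < cnt c10 t -> cnt c01 t <= cnt c10 t -> exists x R, ec t (Op (Var x) R).
Proof.
case: t => [//|A B] pos le.
have [A' [B' [e st]]] := ec_stuck A B.
have cntE k := perm_occs_cnt k (ec_perm_occs e).
case: A' e st cntE => [x|A1 A2] e st cntE; first by exists x, B'.
by case: (stuck_cnt st) => [|[]]; rewrite -!cntE; lia.
Qed.

Lemma ec_pair_head t :
  1 < nleaves t -> cnt c10 t = 0 -> cnt c01 t = 0 ->
  exists x y R, ec t (Op (Op (Var x) (Var y)) R).
Proof.
case: t => [//|A B] _ z10 z01.
have [A' [B' [e st]]] := ec_stuck A B.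
have cntE k := perm_occs_cnt k (ec_perm_occs e).
case: A' e st cntE => [x|A1 A2] e st cntE.
  by move: (cntE c10); rewrite z10 /cnt leaf_cls_Op.
case: (stuck_cnt st) => [|[_ _]]; first by rewrite -!cntE z10 z01.
move: e {st cntE}; case: A1 => [x|? ?] //; case: A2 => [y|? ?] // e _ _.
by exists x, y, B'.
Qed.

(** * Completeness *)

Definition shift_cls (c : cls) (o : nat * cls) : nat * cls :=
  (o.1, (c.1 (+) o.2.1, c.2 (+) o.2.2)).

Lemma occs_at_shift c d t :
  occs_at (c.1 (+) d.1, c.2 (+) d.2) t = map (shift_cls c) (occs_at d t).
Proof.
elim: t d => [v|a IHa b IHb] d //=.
by rewrite map_cat -IHa -IHb /stepL /stepR /= !addbN.
Qed.

Lemma perm_occs_at c R S : perm_eq (occs_at c R) (occs_at c S) -> perm_eq (occs R) (occs S).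
Proof.
have shiftK : involutive (shift_cls c).
  by move=> [v [l r]]; rewrite /shift_cls /= !addbA !addbb.
have E t : occs_at c t = map (shift_cls c) (occs t).
  by rewrite -occs_at_shift /= !addbF -surjective_pairing.
by rewrite !E => /(perm_map (shift_cls c)); rewrite !(mapK shiftK).
Qed.

Lemma ec_fetch A B p y x :
  is_pos A p -> subterm A p = Var y -> (x, walk c10 p) \in occs_at c01 B ->
  exists B', ec (Op A B) (Op (replace_at A p (Var x)) B').
Proof.
move=> Ap Ay /occs_at_pos [q [Bq Bx qp]].
by exists (replace_at B q (subterm A p)); rewrite -Bx; apply: ec_swap.
Qed.

Lemma ec_match_leaf x y R S :
  perm_eq (occs (Op (Var x) R)) (occs (Op (Var y) S)) ->
  exists S', ec (Op (Var y) S) (Op (Var x) S').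
Proof.
move=> /perm_mem/(_ (x, c10)); rewrite /= !inE eqxx /= => /esym/orP [/eqP [->]|].
  by exists S; apply: ec_refl.
exact: (@ec_fetch (Var y) S [::] y x).
Qed.

Lemma ec_match_pair x1 x2 y1 y2 R S :
  perm_eq (occs (Op (Op (Var x1) (Var x2)) R)) (occs (Op (Op (Var y1) (Var y2)) S)) ->
  exists S', ec (Op (Op (Var y1) (Var y2)) S) (Op (Op (Var x1) (Var x2)) S').
Proof.
move=> RS; have [S1 e1] : exists S1, ec (Op (Op (Var y1) (Var y2)) S) (Op (Op (Var x1) (Var y2)) S1).
  move/perm_mem/(_ (x1, c00)): RS; rewrite /= !inE eqxx /= => /esym/or3P [/eqP [->]|/eqP [] _ _ //|].
    by exists S; apply: ec_refl.
  exact: (@ec_fetch (Op (Var y1) (Var y2)) S [:: false] y1 x1).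
have [S2 e2] : exists S2, ec (Op (Op (Var x1) (Var y2)) S1) (Op (Op (Var x1) (Var x2)) S2).
  move/perm_mem/(_ (x2, c11)): (perm_trans RS (ec_perm_occs e1)).
  rewrite /= !inE eqxx /= orbT => /esym/or3P [/eqP [] _ _ //|/eqP [->]|].
    by exists S1; apply: ec_refl.
  exact: (@ec_fetch (Op (Var x1) (Var y2)) S1 [:: true] y2 x2).
by exists S2; apply: ec_trans e1 e2.
Qed.

Definition swap_cls (k : cls) : cls := (k.2, k.1).

Lemma leaf_cls_mirror c t :
  leaf_cls c (mirror t) = rev (map swap_cls (leaf_cls (swap_cls c) t)).
Proof.
elim: t c => [v|a IHa b IHb] [l r] //.
by rewrite [mirror _]/= !leaf_cls_Op IHa IHb map_cat rev_cat.
Qed.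

Lemma cnt_mirror k t : cnt k (mirror t) = cnt (swap_cls k) t.
Proof.
rewrite /cnt leaf_cls_mirror count_rev count_map.
by apply: eq_count => -[l r]; rewrite /= !xpair_eqE andbC.
Qed.

Definition complete_below (n : nat) : Prop :=
  forall t u, nleaves t < n -> perm_eq (occs t) (occs u) -> ec t u.

Lemma perm_occs_ec2 t t' u u' :
  ec t t' -> ec u u' -> perm_eq (occs t) (occs u) -> perm_eq (occs t') (occs u').
Proof.
move=> /ec_sym/ec_perm_occs tt' /ec_perm_occs uu' tu.
exact: perm_trans tt' (perm_trans tu uu').
Qed.

Lemma ec_common_head t u h R S :
  complete_below (nleaves t) -> perm_eq (occs t) (occs u) ->
  ec t (Op h R) -> ec u (Op h S) -> ec t u.
Proof.
move=> IH tu eR eS.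
have RS : perm_eq (occs R) (occs S).
  apply: (@perm_occs_at c01); rewrite -(perm_cat2l (occs_at c10 h)).
  exact: perm_occs_ec2 eR eS tu.
have eRS : ec R S.
  apply: IH RS; rewrite (perm_occs_nleaves (ec_perm_occs eR)) /=.
  by have := nleaves_gt0 h; lia.
apply: (ec_trans eR); apply: (ec_trans (ec_cong (ec_refl _ h) eRS)).
exact: ec_sym eS.
Qed.

Lemma complete_leaf_head t u :
  complete_below (nleaves t) -> perm_eq (occs t) (occs u) ->
  0 < cnt c10 t -> cnt c01 t <= cnt c10 t -> ec t u.
Proof.
move=> IH tu pos le.
have [x [R eR]] := ec_leaf_head pos le.
have [y [S eS]] : exists y S, ec u (Op (Var y) S).
  by apply: ec_leaf_head; rewrite -!(perm_occs_cnt _ tu).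
have [S' eS'] := ec_match_leaf (perm_occs_ec2 eR eS tu).
exact: ec_common_head IH tu eR (ec_trans eS eS').
Qed.

Lemma complete_pair_head t u :
  complete_below (nleaves t) -> perm_eq (occs t) (occs u) ->
  1 < nleaves t -> cnt c10 t = 0 -> cnt c01 t = 0 -> ec t u.
Proof.
move=> IH tu t_gt1 z10 z01.
have [x1 [x2 [R eR]]] := ec_pair_head t_gt1 z10 z01.
have [y1 [y2 [S eS]]] : exists y1 y2 S, ec u (Op (Op (Var y1) (Var y2)) S).
  by apply: ec_pair_head; rewrite -?(perm_occs_nleaves tu) -?(perm_occs_cnt _ tu).
have [S' eS'] := ec_match_pair (perm_occs_ec2 eR eS tu).
exact: ec_common_head IH tu eR (ec_trans eS eS').
Qed.

Lemma complete_step t u :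
  complete_below (nleaves t) -> perm_eq (occs t) (occs u) -> ec t u.
Proof.
move=> IH tu; case: t IH tu => [v|A B] IH tu.
  case: u tu => [w|a b] tu.
    move/perm_mem/(_ (v, c00)): tu; rewrite /= !inE eqxx => /esym/eqP [->].
    exact: ec_refl.
  move: (perm_occs_nleaves tu) => /=.
  by have := nleaves_gt0 a; have := nleaves_gt0 b; lia.
set t := Op A B in IH tu *.
have t_gt1 : 1 < nleaves t by rewrite /= -addn1 leq_add ?nleaves_gt0.
have [leaf_left|] := boolP ((0 < cnt c10 t) && (cnt c01 t <= cnt c10 t)).
  by case/andP: leaf_left; apply: complete_leaf_head.
have [leaf_right|] := boolP ((0 < cnt c01 t) && (cnt c10 t <= cnt c01 t)).
  have e : ec (mirror t) (mirror u).
    case/andP: leaf_right; rewrite -(cnt_mirror c10 t) -(cnt_mirror c01 t) => pos le.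
    apply: complete_leaf_head pos le; first by rewrite nleaves_mirror.
    by apply/Sigma_occs/Sigma_mirror/Sigma_occs.
  by move/ec_mirror: e; rewrite !mirrorK.
move=> not_right not_left.
by apply: complete_pair_head t_gt1 _ _ => //; lia.
Qed.

Lemma perm_occs_ec t u : perm_eq (occs t) (occs u) -> ec t u.
Proof.
suff complete n : complete_below n by apply: (complete (nleaves t).+1).
elim: n => [//|n IH] t' u' t'n; apply: complete_step => s w s_lt.
by apply: IH; lia.
Qed.

Theorem lemma1p2 : is_basis Sigma_interchange Sigma.
Proof.
move=> p q; split; first exact: eq_conseq_Sigma.
by move/Sigma_perm_occs/perm_occs_ec.
Qed.
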